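(* Let $\kappa$ be an uncountable regular cardinal and $\mu$ a cardinal with $\mu=\mu^{<\kappa}<2^\kappa$. Assume that every subset of ${}^\kappa\kappa$ of cardinality $\mu$ is a $\mathbf{\Sigma}^1_1$-subset. Then every continuous image of a closed subset of ${}^\kappa\mu$ (i.e. every set of the form $\mathrm{ran}(f)$ where $A\subseteq{}^\kappa\mu$ is closed and $f:A\to{}^\kappa\kappa$ is continuous) is a $\mathbf{\Sigma}^1_1$-subset of ${}^\kappa\kappa$.
   Context: For a cardinal $\nu$, ${}^\kappa\nu$ carries the topology with basic open sets $N_s=\{x\in{}^\kappa\nu : s\subseteq x\}$, $s$ a function from an ordinal below $\kappa$ to $\nu$. A subset of ${}^\kappa\kappa$ is $\mathbf{\Sigma}^1_1$ if it is the projection onto the first coordinate of a closed subset of ${}^\kappa\kappa\times{}^\kappa\kappa$. *)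

(* Generalized Baire spaces over a cardinal kappa, modelled by a
   type K carrying a strict well-order lt whose order type is an initial ordinal
   (elements of K = ordinals below kappa). A cardinal nu is modelled by a type N;
   the space ^kappa nu is the function type K -> N. *)
From Stdlib Require Import Classical FunctionalExtensionality.

Set Implicit Arguments.

Definition card_le (A B : Type) : Prop := exists f : A -> B, forall x y, f x = f y -> x = y.
Definition card_eq (A B : Type) : Prop :=
  exists f : A -> B, (forall x y, f x = f y -> x = y) /\ (forall y, exists x, f x = y).
Definition card_lt (A B : Type) : Prop := card_le A B /\ ~ card_le B A.

Record well_order (K : Type) (lt : K -> K -> bool) : Prop := {
  wo_irrefl : forall a, lt a a = false;
  wo_trans : forall a b c, lt a b = true -> lt b c = true -> lt a c = true;
  wo_total : forall a b, lt a b = true \/ a = b \/ lt b a = true;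
  wo_wf : well_founded (fun a b => lt a b = true) }.

Definition seg (K : Type) (lt : K -> K -> bool) (a : K) := {b : K | lt b a = true}.

(* the order type of (K,lt) is a cardinal: no ordinal below it has the same size *)
Definition is_initial (K : Type) (lt : K -> K -> bool) : Prop :=
  forall a : K, ~ card_le K (seg lt a).

Definition uncountable (K : Type) : Prop := ~ card_le K nat.

Definition regular (K : Type) (lt : K -> K -> bool) : Prop :=
  forall X : K -> Prop,
    (forall a, exists b, X b /\ (a = b \/ lt a b = true)) -> card_le K {b : K | X b}.

(* nu^{<kappa}: the set of all functions from an ordinal below kappa to nu *)
Definition seqs_below (K : Type) (lt : K -> K -> bool) (N : Type) :=
  {a : K & seg lt a -> N}.

Definition Nbhd (K : Type) (lt : K -> K -> bool) (N : Type) (a : K) (s : seg lt a -> N)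
  (x : K -> N) : Prop :=
  forall (b : K) (h : lt b a = true), x b = s (exist _ b h).

Definition is_open (K : Type) (lt : K -> K -> bool) (N : Type) (U : (K -> N) -> Prop) : Prop :=
  forall x, U x -> exists (a : K) (s : seg lt a -> N),
    Nbhd s x /\ forall y, Nbhd s y -> U y.

Definition is_closed (K : Type) (lt : K -> K -> bool) (N : Type) (C : (K -> N) -> Prop) : Prop :=
  is_open lt (fun x => ~ C x).

Definition is_open2 (K : Type) (lt : K -> K -> bool) (U : (K -> K) * (K -> K) -> Prop) : Prop :=
  forall p, U p -> exists (a1 : K) (s : seg lt a1 -> K) (a2 : K) (t : seg lt a2 -> K),
    Nbhd s (fst p) /\ Nbhd t (snd p) /\
    forall q, Nbhd s (fst q) -> Nbhd t (snd q) -> U q.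

Definition is_closed2 (K : Type) (lt : K -> K -> bool) (C : (K -> K) * (K -> K) -> Prop) : Prop :=
  is_open2 lt (fun p => ~ C p).

Definition sigma11 (K : Type) (lt : K -> K -> bool) (X : (K -> K) -> Prop) : Prop :=
  exists C, is_closed2 lt C /\ forall x, X x <-> exists y, C (x, y).

Definition continuous_on (K : Type) (lt : K -> K -> bool) (N : Type)
  (A : (K -> N) -> Prop) (f : {x : K -> N | A x} -> (K -> K)) : Prop :=
  forall U : (K -> K) -> Prop, is_open lt U ->
    exists V : (K -> N) -> Prop, is_open lt V /\
      forall (x : K -> N) (h : A x), U (f (exist _ x h)) <-> V x.

Definition range (A B : Type) (f : A -> B) : B -> Prop := fun y => exists z, f z = y.

(* The codes of the triples (xi, x|xi, f(x)|xi), for x in A and xi < kappa, form a set of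
   size at most mu^{<kappa} = mu, which is Sigma^1_1 after padding it to size exactly mu.
   Now y is in the range of f iff some x makes every triple (xi, x|xi, y|xi) such a code:
   approximations of x by points of the closed set A converge, by continuity of f, to a
   preimage of y. A pairing function kappa x kappa -> kappa packs x and the kappa many
   Sigma^1_1 witnesses into one element of ^kappa kappa, and the conditions on it are
   closed. *)

From Stdlib Require Import Classical ClassicalEpsilon FunctionalExtensionality.
From Stdlib Require Import ProofIrrelevance Eqdep List.

Lemma sig_eq {A : Type} {P : A -> Prop} (u v : {x : A | P x}) :
  proj1_sig u = proj1_sig v -> u = v.
Proof. apply eq_sig_hprop. intros; apply proof_irrelevance. Qed.

Lemma card_le_refl (A : Type) : card_le A A.
Proof. exists (fun x => x); auto. Qed.

Lemma card_le_trans {A B C : Type} : card_le A B -> card_le B C -> card_le A C.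
Proof. intros [f Hf] [g Hg]. exists (fun x => g (f x)); auto. Qed.

Lemma card_le_prod {A A' B B' : Type} :
  card_le A A' -> card_le B B' -> card_le (A * B) (A' * B').
Proof.
  intros [f Hf] [g Hg]. exists (fun p => (f (fst p), g (snd p))).
  intros [a b] [a' b'] E; injection E; intros; f_equal; auto.
Qed.

Lemma card_le_range {T Q X : Type} (h : T -> X) (q : T -> Q) :
  (forall t t', q t = q t' -> h t = h t') -> card_le {x | range h x} Q.
Proof.
  intros Hq.
  exists (fun x : {x | range h x} =>
            q (proj1_sig (constructive_indefinite_description _ (proj2_sig x)))).
  intros [x Hx] [x' Hx'] E; simpl in E.
  destruct (constructive_indefinite_description _ Hx) as [t Ht].
  destruct (constructive_indefinite_description _ Hx') as [t' Ht'].
  apply sig_eq; simpl. rewrite <- Ht, <- Ht'. auto.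
Qed.

Lemma card_le_fun_bool (X : Type) {Y : Type} {y0 y1 : Y} :
  y0 <> y1 -> card_le (X -> bool) (X -> Y).
Proof.
  intros Hy. exists (fun (g : X -> bool) x => if g x then y1 else y0).
  intros g g' E. apply functional_extensionality; intro x.
  pose proof (equal_f E x) as Ex; simpl in Ex.
  destruct (g x), (g' x); congruence.
Qed.

(* Assign to each [p] some element of [Y] not used by its predecessors. *)
Lemma card_le_of_wf {X Y : Type} {R : X -> X -> Prop} :
  well_founded R -> (forall p q, p <> q -> R p q \/ R q p) -> inhabited Y ->
  (forall p, ~ card_le Y {q | R q p}) -> card_le X Y.
Proof.
  intros Rwf Rtri iY small.
  set (fresh := fun p (rec : forall q, R q p -> Y) =>
                  epsilon iY (fun k => forall q (H : R q p), rec q H <> k)).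
  set (F := Fix Rwf (fun _ => Y) fresh).
  assert (F_eq : forall p, F p = epsilon iY (fun k => forall q, R q p -> F q <> k)).
  { intro p. unfold F at 1. rewrite Fix_eq; [reflexivity|].
    intros x g g' Hg. unfold fresh. replace g' with g; [reflexivity|].
    apply functional_extensionality_dep; intro q.
    apply functional_extensionality_dep; auto. }
  assert (F_fresh : forall p q, R q p -> F q <> F p).
  { intro p. rewrite (F_eq p). apply (epsilon_spec iY (fun k => forall q, R q p -> F q <> k)).
    apply NNPP; intro Hcover. apply (small p).
    assert (pre : forall k, {q | R q p /\ F q = k}).
    { intro k. apply constructive_indefinite_description.
      apply NNPP; intro Hk. apply Hcover. exists k. intros q Hq E. eauto. }
    exists (fun k => exist _ (proj1_sig (pre k)) (proj1 (proj2_sig (pre k)))).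
    intros k k' E. apply (f_equal (@proj1_sig _ _)) in E; simpl in E.
    rewrite <- (proj2 (proj2_sig (pre k))), <- (proj2 (proj2_sig (pre k'))), E.
    reflexivity. }
  exists F. intros p q E. apply NNPP; intro Hne.
  destruct (Rtri p q Hne) as [H|H]; [apply (F_fresh q p H) | apply (F_fresh p q H)]; auto.
Qed.

(* [m] goes to [l t] if [m = j t], and to [r m] if [m] is not in the range of [j]. *)
Lemma card_eq_padding {T M W : Type} (j : T -> M) (l : T -> W) (r : M -> W) :
  (forall t t', j t = j t' -> t = t') ->
  (forall t t', l t = l t' -> t = t') ->
  (forall m m', r m = r m' -> m = m') ->
  (forall t m, l t <> r m) ->
  card_eq M {w | (exists t, w = l t) \/ (exists m, ~ (exists t, j t = m) /\ w = r m)}.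
Proof.
  intros Hj Hl Hr Hlr.
  assert (F : forall m, {w | (exists t, j t = m /\ w = l t) \/ (~ (exists t, j t = m) /\ w = r m)}).
  { intro m. destruct (excluded_middle_informative (exists t, j t = m)) as [H|H].
    - destruct (constructive_indefinite_description _ H) as [t Ht]. exists (l t); eauto.
    - exists (r m); auto. }
  assert (F_in : forall m, (exists t, proj1_sig (F m) = l t) \/
                           (exists m', ~ (exists t, j t = m') /\ proj1_sig (F m) = r m')).
  { intro m. destruct (proj2_sig (F m)) as [[t [_ E]]|[Hn E]]; eauto. }
  exists (fun m => exist _ (proj1_sig (F m)) (F_in m)). split.
  - intros m m' E. apply (f_equal (@proj1_sig _ _)) in E; simpl in E.
    destruct (proj2_sig (F m)) as [[t [Ht E1]]|[Hn E1]];
      destruct (proj2_sig (F m')) as [[t' [Ht' E1']]|[Hn' E1']];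
      rewrite E1, E1' in E.
    + apply Hl in E. congruence.
    + destruct (Hlr _ _ E).
    + destruct (Hlr _ _ (eq_sym E)).
    + auto.
  - intros [w [[t Hw]|[m [Hm Hw]]]].
    + exists (j t). apply sig_eq; simpl.
      destruct (proj2_sig (F (j t))) as [[t' [Ht' E]]|[Hn E]].
      * apply Hj in Ht'. congruence.
      * exfalso; eauto.
    + exists m. apply sig_eq; simpl.
      destruct (proj2_sig (F m)) as [[t [Ht E]]|[_ E]]; [exfalso; eauto | congruence].
Qed.

Definition agree {K N : Type} (lt : K -> K -> bool) (a : K) (x y : K -> N) : Prop :=
  forall b, lt b a = true -> x b = y b.

Definition agree2 {K : Type} (lt : K -> K -> bool) a (p q : (K -> K) * (K -> K)) : Prop :=
  agree lt a (fst p) (fst q) /\ agree lt a (snd p) (snd q).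

Definition locally_determined {K : Type} (lt : K -> K -> bool)
  (Phi : (K -> K) * (K -> K) -> (K -> K) * (K -> K)) : Prop :=
  forall c, exists b, forall p q, agree2 lt b p q ->
    fst (Phi p) c = fst (Phi q) c /\ snd (Phi p) c = snd (Phi q) c.

Section Kappa.

Context {K : Type} {lt : K -> K -> bool}.
Hypothesis Hwo : well_order lt.

Definition restr {N : Type} (z : K -> N) (a : K) : seg lt a -> N :=
  fun i => z (proj1_sig i).

Lemma agree_mono {N : Type} a b (x y : K -> N) :
  lt a b = true -> agree lt b x y -> agree lt a x y.
Proof. intros Hab H c Hc. apply H. exact (wo_trans Hwo _ _ _ Hc Hab). Qed.

Lemma Nbhd_agree {N : Type} a (s : seg lt a -> N) (x y : K -> N) :
  agree lt a y x -> Nbhd s x -> Nbhd s y.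
Proof. intros Hyx Hx b hb. rewrite (Hyx b hb). apply Hx. Qed.

Lemma exists_minimal : inhabited K -> exists a, seg lt a -> False.
Proof.
  intros [k]. induction k as [k IH] using (well_founded_ind (wo_wf Hwo)).
  destruct (classic (exists i : seg lt k, True)) as [[[b hb] _]|Hempty].
  - exact (IH b hb).
  - exists k. intro i. exact (Hempty (ex_intro _ i I)).
Qed.

Hypothesis Hunc : uncountable K.
Hypothesis Hreg : regular lt.
Hypothesis Hcard : is_initial lt.

Lemma K_inhabited : inhabited K.
Proof.
  apply NNPP; intro H. apply Hunc. exists (fun _ => 0).
  intro x. exfalso. exact (H (inhabits x)).
Qed.

(* A largest element would be cofinal, so [K] would inject into a singleton. *)
Lemma exists_gt a : exists b, lt a b = true.
Proof.
  apply NNPP; intro Hmax.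
  assert (cof : forall b, exists c, c = a /\ (b = c \/ lt b c = true)).
  { intro b. exists a. split; [reflexivity|].
    destruct (wo_total Hwo b a) as [h|[h|h]]; auto. exfalso; eauto. }
  destruct (Hreg _ cof) as [g Hg]. apply Hunc. exists (fun _ => 0).
  intros x y _. apply Hg. apply sig_eq.
  destruct (g x) as [u hu], (g y) as [v hv]; simpl; congruence.
Qed.

Lemma exists_gt_all (l : list K) : exists b, forall a, In a l -> lt a b = true.
Proof.
  induction l as [|a l [b Hb]].
  - destruct K_inhabited as [k]. exists k. intros a [].
  - destruct (wo_total Hwo a b) as [h|h].
    + exists b. intros c [<-|Hc]; auto.
    + destruct (exists_gt a) as [b' Hb']. exists b'. intros c [<-|Hc]; [exact Hb'|].
      destruct h as [<-|h]; [exact (wo_trans Hwo _ _ _ (Hb c Hc) Hb')|].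
      exact (wo_trans Hwo _ _ _ (wo_trans Hwo _ _ _ (Hb c Hc) h) Hb').
Qed.

Lemma bounded_of_card_le_seg (X : K -> Prop) a :
  card_le {b | X b} (seg lt a) -> exists b, forall k, X k -> lt k b = true.
Proof.
  intros Hle. apply NNPP; intro Hunb.
  assert (cof : forall b, exists k, X k /\ (b = k \/ lt b k = true)).
  { intro b. apply NNPP; intro Hb. apply Hunb. exists b. intros k Hk.
    destruct (wo_total Hwo k b) as [h|[h|h]]; auto; exfalso; apply Hb; eauto. }
  exact (Hcard a (card_le_trans (Hreg X cof) Hle)).
Qed.

Lemma seg_fun_bounded a (g : seg lt a -> K) : exists b, forall i, lt (g i) b = true.
Proof.
  destruct (bounded_of_card_le_seg (range g) a
              (card_le_range g (fun i => i) (fun i i' E => f_equal g E))) as [b Hb].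
  exists b. intro i. apply Hb. exists i. reflexivity.
Qed.

(* Each fibre of the first projection is bounded, and so is the family of these bounds. *)
Lemma not_card_le_seg_sq c : ~ card_le K (seg lt c * seg lt c).
Proof.
  intros [g Hg].
  assert (fiber_bounded : forall i, exists b, forall k, fst (g k) = i -> lt k b = true).
  { intro i. apply (bounded_of_card_le_seg (fun k => fst (g k) = i) c).
    exists (fun k : {k | fst (g k) = i} => snd (g (proj1_sig k))).
    intros [k hk] [k' hk'] E; simpl in *. apply sig_eq; simpl. apply Hg.
    apply injective_projections; congruence. }
  destruct (choice _ fiber_bounded) as [bound Hbound].
  destruct (seg_fun_bounded c bound) as [b Hb].
  pose proof (wo_trans Hwo _ _ _ (Hbound (fst (g b)) b eq_refl) (Hb (fst (g b)))) as Hbb.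
  rewrite (wo_irrefl Hwo) in Hbb. discriminate.
Qed.

Definition kmax a b := if lt a b then b else a.

Lemma kmax_lt_l a b c : lt (kmax a b) c = true -> lt a c = true.
Proof.
  unfold kmax. destruct (lt a b) eqn:E; auto. intro H. exact (wo_trans Hwo _ _ _ E H).
Qed.

Lemma kmax_lt_r a b c : lt (kmax a b) c = true -> lt b c = true.
Proof.
  unfold kmax. destruct (lt a b) eqn:E; auto.
  destruct (wo_total Hwo a b) as [h|[<-|h]]; [congruence|auto|].
  intro H. exact (wo_trans Hwo _ _ _ h H).
Qed.

Definition goedel_lt (p q : K * K) : Prop :=
  lt (kmax (fst p) (snd p)) (kmax (fst q) (snd q)) = true \/
  (kmax (fst p) (snd p) = kmax (fst q) (snd q) /\
   (lt (fst p) (fst q) = true \/ (fst p = fst q /\ lt (snd p) (snd q) = true))).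

Lemma goedel_wf : well_founded goedel_lt.
Proof.
  assert (H : forall m a b, kmax a b = m -> Acc goedel_lt (a, b)).
  { intro m. induction m as [m IHm] using (well_founded_ind (wo_wf Hwo)).
    intro a. induction a as [a IHa] using (well_founded_ind (wo_wf Hwo)).
    intro b. induction b as [b IHb] using (well_founded_ind (wo_wf Hwo)).
    intro Hm. constructor. intros [a' b'] [H1|[H2 [H3|[H4 H5]]]]; simpl in *.
    - rewrite Hm in H1. eauto.
    - eapply IHa; eauto. congruence.
    - subst a'. eapply IHb; eauto. congruence. }
  intros [a b]. eauto.
Qed.

Lemma goedel_trichotomous p q : p <> q -> goedel_lt p q \/ goedel_lt q p.
Proof.
  intro Hne. unfold goedel_lt.
  destruct (wo_total Hwo (kmax (fst p) (snd p)) (kmax (fst q) (snd q))) as [h|[h|h]];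
    [tauto| |tauto].
  destruct (wo_total Hwo (fst p) (fst q)) as [h1|[h1|h1]]; [tauto| |right; right; auto].
  destruct (wo_total Hwo (snd p) (snd q)) as [h2|[h2|h2]]; [tauto| |right; right; auto].
  exfalso. apply Hne. destruct p, q; simpl in *; congruence.
Qed.

Lemma goedel_pred_small p : ~ card_le K {q | goedel_lt q p}.
Proof.
  destruct (exists_gt (kmax (fst p) (snd p))) as [c Hc].
  assert (below : forall q, goedel_lt q p -> lt (kmax (fst q) (snd q)) c = true).
  { intros q [H|[H _]]; [exact (wo_trans Hwo _ _ _ H Hc) | rewrite H; exact Hc]. }
  intro Hle. apply (not_card_le_seg_sq c). apply (card_le_trans Hle).
  exists (fun q : {q | goedel_lt q p} =>
            (exist _ (fst (proj1_sig q)) (kmax_lt_l _ _ _ (below _ (proj2_sig q))),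
             exist (fun b => lt b c = true) (snd (proj1_sig q))
               (kmax_lt_r _ _ _ (below _ (proj2_sig q))))).
  intros [[a b] h] [[a' b'] h'] E; simpl in E. apply sig_eq; simpl.
  injection E; intros; subst; reflexivity.
Qed.

Lemma pairing_exists :
  exists (pair : K * K -> K) (unpair : K -> K * K), forall p, unpair (pair p) = p.
Proof.
  destruct K_inhabited as [k].
  destruct (card_le_of_wf goedel_wf goedel_trichotomous (inhabits k) goedel_pred_small)
    as [pair Hpair].
  exists pair, (fun g => epsilon (inhabits (k, k)) (fun p => pair p = g)).
  intro p. apply Hpair. apply (epsilon_spec (inhabits (k, k)) (fun q => pair q = pair p)).
  eauto.
Qed.


Lemma is_closed2P (C : (K -> K) * (K -> K) -> Prop) :
  is_closed2 lt C <-> forall p, ~ C p -> exists a, forall q, agree2 lt a q p -> ~ C q.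
Proof.
  split.
  - intros HC p Hp. destruct (HC p Hp) as [a1 [s [a2 [t [Hs [Ht Hst]]]]]].
    destruct (exists_gt_all (a1 :: a2 :: nil)) as [a Ha].
    exists a. intros q [Hq1 Hq2]. apply Hst.
    + apply (Nbhd_agree _ _ (fst p)); [|exact Hs].
      apply (agree_mono a1 a); auto. apply Ha; simpl; auto.
    + apply (Nbhd_agree _ _ (snd p)); [|exact Ht].
      apply (agree_mono a2 a); auto. apply Ha; simpl; auto.
  - intros H p Hp. destruct (H p Hp) as [a Ha].
    exists a, (restr (fst p) a), a, (restr (snd p) a).
    split; [intros b hb; reflexivity|]. split; [intros b hb; reflexivity|].
    intros q Hq1 Hq2. apply Ha. split; [exact Hq1 | exact Hq2].
Qed.

Lemma closed2_bigcap {I : Type} (C : I -> (K -> K) * (K -> K) -> Prop) :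
  (forall i, is_closed2 lt (C i)) -> is_closed2 lt (fun p => forall i, C i p).
Proof.
  intros HC p Hp. apply not_all_ex_not in Hp. destruct Hp as [i Hi].
  destruct (HC i p Hi) as [a1 [s [a2 [t [Hs [Ht Hst]]]]]].
  exists a1, s, a2, t. split; [exact Hs|]. split; [exact Ht|].
  intros q Hq1 Hq2 Hall. exact (Hst q Hq1 Hq2 (Hall i)).
Qed.

Lemma closed2_preimage Phi (C : (K -> K) * (K -> K) -> Prop) :
  locally_determined lt Phi -> is_closed2 lt C -> is_closed2 lt (fun p => C (Phi p)).
Proof.
  intros HPhi HC. apply is_closed2P. intros p Hp.
  destruct (proj1 (is_closed2P C) HC _ Hp) as [a Ha].
  destruct (choice _ HPhi) as [dep Hdep].
  destruct (seg_fun_bounded a (fun i => dep (proj1_sig i))) as [b Hb].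
  exists b. intros q [Hq1 Hq2]. apply Ha.
  split; intros c hc; apply (Hdep c);
    split; apply (agree_mono _ b); auto; exact (Hb (exist _ c hc)).
Qed.

Lemma sigma11_preimage (h : (K -> K) -> K -> K) (X Y : (K -> K) -> Prop) :
  locally_determined lt (fun p => (h (fst p), snd p)) ->
  (forall x, Y x <-> X (h x)) -> sigma11 lt X -> sigma11 lt Y.
Proof.
  intros Hh HY [C [HC HCX]].
  exists (fun p => C (h (fst p), snd p)). split.
  - exact (closed2_preimage _ C Hh HC).
  - intro x. rewrite HY. apply HCX.
Qed.

Lemma closed_of_agree {N : Type} (C : (K -> N) -> Prop) x :
  is_closed lt C -> (forall a, exists y, C y /\ agree lt a y x) -> C x.
Proof.
  intros HC Happrox. apply NNPP; intro Hx.
  destruct (HC x Hx) as [a [s [Hs Hout]]].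
  destruct (Happrox a) as [y [Hy Hyx]].
  exact (Hout y (Nbhd_agree _ _ _ _ Hyx Hs) Hy).
Qed.

Lemma continuous_on_agree {N : Type} (A : (K -> N) -> Prop) f :
  continuous_on lt A f ->
  forall x (hx : A x) eta, exists a, forall u (hu : A u),
    agree lt a u x -> f (exist _ u hu) eta = f (exist _ x hx) eta.
Proof.
  intros Hf x hx eta.
  set (U := fun z : K -> K => z eta = f (exist _ x hx) eta).
  assert (HU : is_open lt U).
  { intros z Hz. destruct (exists_gt eta) as [a Ha].
    exists a, (restr z a). split; [intros b hb; reflexivity|].
    intros z' Hz'. unfold U. rewrite <- Hz. exact (Hz' eta Ha). }
  destruct (Hf U HU) as [V [HV HUV]].
  destruct (HV x (proj1 (HUV x hx) eq_refl)) as [a [s [Hs HsV]]].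
  exists a. intros u hu Hux. apply (HUV u hu). apply HsV.
  exact (Nbhd_agree _ _ _ _ Hux Hs).
Qed.

Lemma range_of_approx {N : Type} (A : (K -> N) -> Prop) f x y :
  is_closed lt A -> continuous_on lt A f ->
  (forall xi, exists u : {u | A u}, agree lt xi (proj1_sig u) x /\ agree lt xi (f u) y) ->
  range f y.
Proof.
  intros HA Hf Happrox.
  assert (hx : A x).
  { apply (closed_of_agree A x HA). intro a.
    destruct (Happrox a) as [[u hu] [Hux _]]. exists u. auto. }
  exists (exist _ x hx). apply functional_extensionality; intro eta.
  destruct (continuous_on_agree A f Hf x hx eta) as [a Ha].
  destruct (exists_gt_all (a :: eta :: nil)) as [xi Hxi].
  destruct (Happrox xi) as [[u hu] [Hux Hfu]]; simpl in Hux.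
  transitivity (f (exist _ u hu) eta).
  - symmetry. exact (Ha u hu (agree_mono a xi _ _ (Hxi a (or_introl eq_refl)) Hux)).
  - apply Hfu. apply Hxi. simpl; auto.
Qed.

End Kappa.

Section Sequences.

Context {K : Type} {lt : K -> K -> bool}.
Hypotheses (Hwo : well_order lt) (Hunc : uncountable K) (Hreg : regular lt).

Lemma card_le_seqs_below {X Y : Type} :
  card_le X Y -> card_le (seqs_below lt X) (seqs_below lt Y).
Proof.
  intros [h Hh].
  exists (fun s : seqs_below lt X =>
            existT (fun a => seg lt a -> Y) (projT1 s) (fun i => h (projT2 s i))).
  intros [a s] [a' s'] E; simpl in E.
  assert (a = a') by exact (f_equal (@projT1 _ _) E). subst a'.
  apply inj_pair2 in E. f_equal. apply functional_extensionality; intro i.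
  apply Hh. exact (equal_f E i).
Qed.

Variable M : Type.
Hypothesis Hmu : card_eq (seqs_below lt M) M.

(* Constant sequences of length [k], with value the code of the empty sequence. *)
Lemma card_le_K_M : card_le K M.
Proof.
  destruct Hmu as [hm [Hhm _]].
  destruct (exists_minimal Hwo (K_inhabited Hunc)) as [a0 Ha0].
  set (m0 := hm (existT _ a0 (fun i => False_rect M (Ha0 i)))).
  exists (fun k => hm (existT (fun a => seg lt a -> M) k (fun _ => m0))).
  intros k k' E. apply Hhm in E. exact (f_equal (@projT1 _ _) E).
Qed.

Lemma card_le_MM_M : card_le (M * M) M.
Proof.
  destruct Hmu as [hm [Hhm _]].
  destruct (K_inhabited Hunc) as [k0].
  destruct (exists_gt Hwo Hunc Hreg k0) as [k1 H01].
  destruct (exists_gt Hwo Hunc Hreg k1) as [k2 H12].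
  exists (fun p => hm (existT (fun a => seg lt a -> M) k2
                          (fun i => if lt (proj1_sig i) k1 then fst p else snd p))).
  intros [m1 m2] [m1' m2'] E. apply Hhm, inj_pair2 in E.
  pose proof (equal_f E (exist _ k0 (wo_trans Hwo _ _ _ H01 H12))) as E0.
  pose proof (equal_f E (exist _ k1 H12)) as E1. simpl in E0, E1.
  rewrite H01 in E0. rewrite (wo_irrefl Hwo) in E1. congruence.
Qed.

Lemma card_le_seqs_below_prod : card_le (seqs_below lt (M * K)) M.
Proof.
  apply (card_le_trans (card_le_seqs_below
           (card_le_trans (card_le_prod (card_le_refl M) card_le_K_M) card_le_MM_M))).
  destruct Hmu as [hm [Hhm _]]. exists hm. exact Hhm.
Qed.

End Sequences.

Section Coding.

Context {K : Type} {lt : K -> K -> bool}.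
Hypotheses (Hwo : well_order lt) (Hunc : uncountable K) (Hreg : regular lt)
  (Hcard : is_initial lt).
Variables (pair : K * K -> K) (unpair : K -> K * K).
Hypothesis pairK : forall p, unpair (pair p) = p.

Lemma pair_inj p q : pair p = pair q -> p = q.
Proof. intro E. rewrite <- (pairK p), <- (pairK q), E. reflexivity. Qed.

Definition tag (t : K) (z : K -> K) : K -> K := fun g => pair (t, z g).

Lemma tag_inj t t' z z' : tag t z = tag t' z' -> t = t' /\ z = z'.
Proof.
  intro E.
  assert (Eg : forall g, (t, z g) = (t', z' g)) by (intro g; apply pair_inj, (equal_f E g)).
  split; [exact (f_equal fst (Eg t)) |].
  apply functional_extensionality; intro g. exact (f_equal snd (Eg g)).
Qed.

Lemma tag_locally_determined t : locally_determined lt (fun p => (tag t (fst p), snd p)).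
Proof.
  intro c. destruct (exists_gt Hwo Hunc Hreg c) as [b Hb]. exists b.
  intros p q [E1 E2]. simpl. unfold tag. rewrite (E1 c Hb), (E2 c Hb). auto.
Qed.

Section SmallSets.

Variables (M : Type) (e : M -> K -> K) (k0 k1 : K).
Hypotheses (He : forall m m', e m = e m' -> m = m') (Hk : k0 <> k1).
Hypothesis Hsub : forall X : (K -> K) -> Prop, card_eq M {x | X x} -> sigma11 lt X.

(* Pad [S] with codes of the unused part of [M] to a set of size exactly [M]; [S] is
   then a continuous preimage of the padded set. *)
Lemma sigma11_of_card_le (S : (K -> K) -> Prop) : card_le {z | S z} M -> sigma11 lt S.
Proof.
  intros [j Hj].
  set (l := fun s : {z | S z} => tag k0 (proj1_sig s)).
  set (r := fun m => tag k1 (e m)).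
  assert (Hpad : card_eq M {w | (exists s, w = l s) \/
                               (exists m, ~ (exists s, j s = m) /\ w = r m)}).
  { apply card_eq_padding; [exact Hj | | |].
    - intros s s' E. apply sig_eq. exact (proj2 (tag_inj _ _ _ _ E)).
    - intros m m' E. exact (He _ _ (proj2 (tag_inj _ _ _ _ E))).
    - intros s m E. exact (Hk (proj1 (tag_inj _ _ _ _ E))). }
  refine (sigma11_preimage Hwo Hunc Hreg Hcard (tag k0) _ S (tag_locally_determined k0) _
            (Hsub _ Hpad)).
  intro z. split.
  - intro Hz. left. exists (exist _ z Hz). reflexivity.
  - intros [[s E]|[m [_ E]]]; apply tag_inj in E.
    + destruct E as [_ ->]. exact (proj2_sig s).
    + destruct (Hk (proj1 E)).
Qed.

End SmallSets.

(* [xi] is stored in every coordinate so that equal codes have equal [xi]. *)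
Definition prefix_code (xi : K) (c : K -> K -> K) (y : K -> K) : K -> K :=
  fun g => pair (xi, if lt (fst (unpair g)) xi
                     then pair (c (fst (unpair g)) (snd (unpair g)), y (fst (unpair g)))
                     else xi).

Lemma prefix_code_ext xi c c' y y' :
  (forall a, lt a xi = true -> c a = c' a /\ y a = y' a) ->
  prefix_code xi c y = prefix_code xi c' y'.
Proof.
  intro H. apply functional_extensionality; intro g. unfold prefix_code.
  destruct (lt (fst (unpair g)) xi) eqn:E; [|reflexivity].
  destruct (H _ E) as [-> ->]. reflexivity.
Qed.

Lemma prefix_code_inj xi xi' c c' y y' :
  prefix_code xi c y = prefix_code xi' c' y' ->
  forall a, lt a xi = true -> c a = c' a /\ y a = y' a.
Proof.
  intros E a ha.
  assert (Eb : forall b, pair (xi, pair (c a b, y a)) =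
                         pair (xi', if lt a xi' then pair (c' a b, y' a) else xi')).
  { intro b. pose proof (equal_f E (pair (a, b))) as Eb.
    unfold prefix_code in Eb. rewrite !pairK in Eb. simpl in Eb. rewrite ha in Eb. exact Eb. }
  assert (xi = xi') by exact (f_equal fst (pair_inj _ _ (Eb a))).
  subst xi'. rewrite ha in Eb.
  assert (Hb : forall b, c a b = c' a b /\ y a = y' a).
  { intro b. pose proof (f_equal snd (pair_inj _ _ (Eb b))) as Eab; simpl in Eab.
    apply pair_inj in Eab. injection Eab; auto. }
  split; [apply functional_extensionality; intro b; apply Hb | apply (Hb a)].
Qed.

Definition pfst (W : K -> K) (a b : K) : K := fst (unpair (W (pair (a, b)))).
Definition psnd (W : K -> K) (a b : K) : K := snd (unpair (W (pair (a, b)))).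

Lemma pfst_psnd_surj (c v : K -> K -> K) : exists W, pfst W = c /\ psnd W = v.
Proof.
  exists (fun g => pair (c (fst (unpair g)) (snd (unpair g)),
                         v (fst (unpair g)) (snd (unpair g)))).
  split; apply functional_extensionality; intro a; apply functional_extensionality; intro b;
    unfold pfst, psnd; rewrite !pairK; reflexivity.
Qed.

Definition stage (xi : K) (p : (K -> K) * (K -> K)) : (K -> K) * (K -> K) :=
  (prefix_code xi (pfst (snd p)) (fst p), psnd (snd p) xi).

Lemma stage_locally_determined xi : locally_determined lt (stage xi).
Proof.
  intro g.
  destruct (exists_gt_all Hwo Hunc Hreg
              (fst (unpair g) :: pair (fst (unpair g), snd (unpair g)) :: pair (xi, g) :: nil))
    as [b Hb].
  exists b. intros [y W] [y' W'] [Hy HW]; simpl in *.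
  unfold prefix_code, pfst, psnd.
  rewrite (Hy (fst (unpair g))), (HW (pair (fst (unpair g), snd (unpair g)))),
    (HW (pair (xi, g))) by (apply Hb; simpl; tauto).
  auto.
Qed.

Section Range.

Variables (M : Type) (e : M -> K -> K).
Hypothesis He : forall m m', e m = e m' -> m = m'.
Variables (A : (K -> M) -> Prop) (f : {x | A x} -> K -> K).
Hypotheses (HA : is_closed lt A) (Hf : continuous_on lt A f).

Definition code_set : (K -> K) -> Prop :=
  range (fun t : K * {x | A x} =>
           prefix_code (fst t) (fun a => e (proj1_sig (snd t) a)) (f (snd t))).

Lemma card_le_code_set : card_eq (seqs_below lt M) M -> card_le {z | code_set z} M.
Proof.
  intro Hmu.
  refine (card_le_trans (card_le_range _
            (fun t : K * {x | A x} =>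
               existT (fun a => seg lt a -> M * K) (fst t)
                 (fun i => (proj1_sig (snd t) (proj1_sig i), f (snd t) (proj1_sig i)))) _)
            (card_le_seqs_below_prod Hwo Hunc Hreg M Hmu)).
  intros [xi u] [xi' u'] E; simpl in E.
  assert (xi = xi') by exact (f_equal (@projT1 _ _) E). subst xi'.
  apply inj_pair2 in E. apply prefix_code_ext. intros a ha; simpl.
  pose proof (equal_f E (exist _ a ha)) as Ea; simpl in Ea.
  injection Ea as E1 E2. rewrite E1, E2. auto.
Qed.

Lemma range_of_coded_approx (c : K -> K -> K) y :
  (forall xi, exists u : {x | A x}, forall a, lt a xi = true ->
     c a = e (proj1_sig u a) /\ y a = f u a) ->
  range f y.
Proof.
  intro Happrox.
  assert (Hc : forall a, exists m, e m = c a).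
  { intro a. destruct (exists_gt Hwo Hunc Hreg a) as [xi Hxi].
    destruct (Happrox xi) as [u Hu].
    exists (proj1_sig u a). symmetry. exact (proj1 (Hu a Hxi)). }
  destruct (choice _ Hc) as [x Hx].
  apply (range_of_approx Hwo Hunc Hreg A f x y HA Hf). intro xi.
  destruct (Happrox xi) as [u Hu]. exists u.
  split; intros a ha; destruct (Hu a ha) as [E1 E2].
  - apply He. rewrite Hx, E1. reflexivity.
  - symmetry. exact E2.
Qed.

(* The witness [W] for [y] codes both a candidate preimage (via [pfst W] and [e]) and,
   for every [xi], a witness [psnd W xi] that its [xi]-th prefix code lies in [code_set]. *)
Lemma range_sigma11_of_code_set : sigma11 lt code_set -> sigma11 lt (range f).
Proof.
  intros [C [HC HCS]].
  exists (fun p => forall xi, C (stage xi p)). split.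
  - apply closed2_bigcap. intro xi.
    exact (closed2_preimage Hwo Hunc Hreg Hcard _ C (stage_locally_determined xi) HC).
  - intro y. split.
    + intros [u <-].
      assert (Hv : forall xi, exists v,
                 C (prefix_code xi (fun a => e (proj1_sig u a)) (f u), v)).
      { intro xi. apply HCS. exists (xi, u). reflexivity. }
      destruct (choice _ Hv) as [v Hv'].
      destruct (pfst_psnd_surj (fun a => e (proj1_sig u a)) v) as [W [HW1 HW2]].
      exists W. intro xi. unfold stage; simpl. rewrite HW1, HW2. apply Hv'.
    + intros [W HW]. apply (range_of_coded_approx (pfst W)). intro xi.
      destruct (proj2 (HCS (prefix_code xi (pfst W) y)) (ex_intro _ _ (HW xi)))
        as [[xi' u] Et].
      exists u. exact (prefix_code_inj _ _ _ _ _ _ (eq_sym Et)).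
Qed.

End Range.

End Coding.

Theorem proposition1p20 (K : Type) (lt : K -> K -> bool) (M : Type)
  (Hwo : well_order lt) (Hcard : is_initial lt) (Hunc : uncountable K)
  (Hreg : regular lt)
  (Hmu : card_eq (seqs_below lt M) M)
  (Hmu2 : card_lt M (K -> bool))
  (Hsub : forall X : (K -> K) -> Prop, card_eq M {x : K -> K | X x} -> sigma11 lt X)
  (A : (K -> M) -> Prop) (HA : is_closed lt A)
  (f : {x : K -> M | A x} -> (K -> K)) (Hf : continuous_on lt A f) :
  sigma11 lt (range f).
Proof.
  destruct (pairing_exists Hwo Hunc Hreg Hcard) as [pair [unpair pairK]].
  destruct (K_inhabited Hunc) as [k0].
  destruct (exists_gt Hwo Hunc Hreg k0) as [k1 H01].
  assert (Hk : k0 <> k1) by (intros <-; rewrite (wo_irrefl Hwo) in H01; discriminate).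
  destruct (card_le_trans (proj1 Hmu2) (card_le_fun_bool K Hk)) as [e He].
  apply (range_sigma11_of_code_set Hwo Hunc Hreg Hcard pair unpair pairK M e He A f HA Hf).
  apply (sigma11_of_card_le Hwo Hunc Hreg Hcard pair unpair pairK M e k0 k1 He Hk Hsub).
  exact (card_le_code_set Hwo Hunc Hreg pair unpair M e A f Hmu).
Qed.
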